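(* Let $A$ be a real $n\times n$ matrix and suppose there is $\kappa_0>0$ with $u^TAu\ge\kappa_0^2|u|^2$ for all $u\in\mathbb R^n$. (i) The map $u\mapsto Au$ is $2$-monotone. (ii) If $A$ is symmetric and $\alpha>0$, then $\widetilde F_{A,\alpha}(u)=|A^{1/2}u|^\alpha Au$ is $(\alpha+2)$-monotone. (iii) Let $F_{A,\alpha}(u)=|u|^\alpha Au$ with $\alpha>0$. If $\alpha=\kappa_0^2/\|A\|_{\mathrm{op}}$, then $F_{A,\alpha}$ is monotone; if $\alpha<\kappa_0^2/\|A\|_{\mathrm{op}}$, then $F_{A,\alpha}$ is $(\alpha+2)$-monotone.
   Context: $|\cdot|$ is the Euclidean norm, $\|A\|_{\mathrm{op}}=\max_{|x|=1}|Ax|$, and for symmetric positive definite $A$, $A^{1/2}$ is its symmetric positive definite square root. A map $F:\mathbb R^n\to\mathbb R^n$ is monotone if $(F(u)-F(v))\cdot(u-v)\ge0$ for all $u,v$; for $\beta>0$ it is $\beta$-monotone if there is $C>0$ with $(F(u)-F(v))\cdot(u-v)\ge C|u-v|^\beta$ for all $u,v$. *)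

From HB Require Import structures.
From mathcomp Require Import all_boot all_order all_algebra.
From mathcomp Require Import all_classical all_reals exp.
From Stdlib Require Import ClassicalEpsilon.
Set Implicit Arguments. Unset Strict Implicit. Unset Printing Implicit Defensive.
Import Order.TTheory GRing.Theory Num.Theory.
Local Open Scope ring_scope.
Local Open Scope classical_set_scope.

Definition dotv (R : realType) (n : nat) (u v : 'cV[R]_n) : R :=
  \sum_(i < n) u i 0 * v i 0.

Definition vnorm (R : realType) (n : nat) (u : 'cV[R]_n) : R :=
  Num.sqrt (dotv u u).

Definition opnorm (R : realType) (n : nat) (A : 'M[R]_n) : R :=
  sup [set vnorm (A *m x) | x in [set x : 'cV[R]_n | vnorm x = 1]].

Definition symmx (R : realType) (n : nat) (A : 'M[R]_n) : Prop :=
  A^T = A.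

Definition posdefmx (R : realType) (n : nat) (A : 'M[R]_n) : Prop :=
  symmx A /\ forall u : 'cV[R]_n, u != 0 -> 0 < dotv u (A *m u).

(* A^{1/2}: the symmetric positive definite square root (chosen by epsilon;
   it is unique when A is symmetric positive definite). *)
Definition sqrtmx (R : realType) (n : nat) (A : 'M[R]_n) : 'M[R]_n :=
  epsilon (inhabits 0) (fun S : 'M[R]_n => posdefmx S /\ S *m S = A).

Definition monotone_map (R : realType) (n : nat) (F : 'cV[R]_n -> 'cV[R]_n) : Prop :=
  forall u v, 0 <= dotv (F u - F v) (u - v).

Definition beta_monotone (R : realType) (n : nat) (beta : R)
  (F : 'cV[R]_n -> 'cV[R]_n) : Prop :=
  exists2 C : R, 0 < C &
    forall u v, C * (vnorm (u - v)) `^ beta <= dotv (F u - F v) (u - v).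

From HB Require Import structures.
From mathcomp Require Import all_boot all_order all_algebra.
From mathcomp Require Import all_classical all_reals exp.
From mathcomp Require Import complex spectral sesquilinear.
From mathcomp Require Import ring lra.
From Stdlib Require Import ClassicalEpsilon.
Import Order.TTheory GRing.Theory Num.Theory.
Set Implicit Arguments. Unset Strict Implicit. Unset Printing Implicit Defensive.
Local Open Scope ring_scope.

(** (ii) With [S := A^(1/2)], [a := |S u|], [b := |S v|], the pairing
  [<F u - F v, u - v>] equals
  [(a^α + b^α)/2 * |S (u - v)|^2 + (a^α - b^α)(a^2 - b^2)/2]; the second
  term is nonnegative, and [max(a, b) >= |S (u - v)|/2 >= κ0 |u - v|/2].

  (iii) For [|v| <= |u|] write
  [|u|^α A u - |v|^α A v = |u|^α A (u - v) + (|u|^α - |v|^α) A v].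
  The elementary bound [(a^α - b^α) b <= α a^α (a - b)] for [0 <= b <= a]
  (a consequence of [ln t <= t - 1]) makes the second term cost at most
  [α ||A|| |u|^α |u - v|^2], and [|u| >= |u - v|/2].

  The square root of [A] comes from the complex spectral theorem:
  [S := P^* diag(sqrt d) P] where [A = P^* diag(d) P].  It is real because a
  function of a normal matrix does not depend on the diagonalising unitary,
  and the conjugate of [P] diagonalises the real matrix [A] as well. *)

Section Euclid.
Variables (R : realType) (n : nat).
Implicit Types (u v w : 'cV[R]_n) (a : R).

Lemma dotvC u v : dotv u v = dotv v u.
Proof. by apply: eq_bigr => i _; rewrite mulrC. Qed.

Lemma dotvDl u v w : dotv (u + v) w = dotv u w + dotv v w.
Proof. by rewrite /dotv -big_split; apply: eq_bigr => i _; rewrite mxE mulrDl. Qed.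

Lemma dotvZl a u w : dotv (a *: u) w = a * dotv u w.
Proof. by rewrite /dotv mulr_sumr; apply: eq_bigr => i _; rewrite mxE mulrA. Qed.

Lemma dotvNl u w : dotv (- u) w = - dotv u w.
Proof. by rewrite -scaleN1r dotvZl mulN1r. Qed.

Lemma dotvBl u v w : dotv (u - v) w = dotv u w - dotv v w.
Proof. by rewrite dotvDl dotvNl. Qed.

Lemma dotvDr u v w : dotv w (u + v) = dotv w u + dotv w v.
Proof. by rewrite dotvC dotvDl !(dotvC w). Qed.

Lemma dotvZr a u w : dotv w (a *: u) = a * dotv w u.
Proof. by rewrite dotvC dotvZl dotvC. Qed.

Lemma dotvNr u w : dotv w (- u) = - dotv w u.
Proof. by rewrite dotvC dotvNl dotvC. Qed.

Lemma dotvBr u v w : dotv w (u - v) = dotv w u - dotv w v.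
Proof. by rewrite dotvDr dotvNr. Qed.

Lemma dotv0l u : dotv 0 u = 0.
Proof. by rewrite /dotv big1 // => i _; rewrite mxE mul0r. Qed.

Lemma dotvv_ge0 u : 0 <= dotv u u.
Proof. by apply: sumr_ge0 => i _; rewrite -expr2 sqr_ge0. Qed.

Lemma dotvv_eq0 u : dotv u u = 0 -> u = 0.
Proof.
move=> /psumr_eq0P uu0; apply/matrixP => i j; rewrite !mxE (ord1 j).
have /eqP := uu0 (fun i _ => ltac:(by rewrite -expr2 sqr_ge0)) i isT.
by rewrite mulf_eq0 orbb => /eqP.
Qed.

Lemma dotv_mulmx (M : 'M[R]_n) u v : dotv u (M *m v) = dotv (M^T *m u) v.
Proof.
rewrite /dotv.
under eq_bigr do rewrite mxE mulr_sumr.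
under [RHS]eq_bigr do rewrite mxE mulr_suml.
rewrite exchange_big /=; apply: eq_bigr => i _; apply: eq_bigr => j _.
by rewrite mxE mulrCA mulrA.
Qed.

Lemma vnorm_ge0 u : 0 <= vnorm u.
Proof. exact: sqrtr_ge0. Qed.

Lemma vnorm_sqr u : vnorm u ^+ 2 = dotv u u.
Proof. by rewrite sqr_sqrtr // dotvv_ge0. Qed.

Lemma vnorm_eq0 u : vnorm u = 0 -> u = 0.
Proof. by move=> u0; apply: dotvv_eq0; rewrite -vnorm_sqr u0 expr0n. Qed.

Lemma vnorm0 : vnorm (0 : 'cV[R]_n) = 0.
Proof. by rewrite /vnorm dotv0l sqrtr0. Qed.

Lemma dotv_sqr_le u v : dotv u v ^+ 2 <= dotv u u * dotv v v.
Proof.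
have [v0|vv_neq0] := eqVneq (dotv v v) 0.
  by rewrite (dotvv_eq0 v0) (dotvC u 0) !dotv0l expr0n /= mulr0.
have vv_gt0 : 0 < dotv v v by rewrite lt_neqAle eq_sym vv_neq0 dotvv_ge0.
(* expand [0 <= |<v,v> u - <u,v> v|^2] *)
have := dotvv_ge0 (dotv v v *: u - dotv u v *: v).
rewrite !(dotvBl, dotvBr, dotvZl, dotvZr) (dotvC v u).
move=> ge0; rewrite mulrC -subr_ge0 -(pmulr_rge0 _ vv_gt0).
by apply: le_trans ge0 _; rewrite le_eqVlt; apply/orP; left; apply/eqP; ring.
Qed.

Lemma normr_dotv_le u v : `|dotv u v| <= vnorm u * vnorm v.
Proof.
rewrite -(ler_pXn2r (isT : (0 < 2)%N)) ?nnegrE ?normr_ge0 ?mulr_ge0 ?vnorm_ge0 //.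
by rewrite real_normK ?num_real // exprMn !vnorm_sqr dotv_sqr_le.
Qed.

Lemma vnormD_le u v : vnorm (u + v) <= vnorm u + vnorm v.
Proof.
rewrite -(ler_pXn2r (isT : (0 < 2)%N)) ?nnegrE ?addr_ge0 ?vnorm_ge0 //.
rewrite vnorm_sqr !(dotvDl, dotvDr) sqrrD !vnorm_sqr (dotvC v u).
have := le_trans (ler_norm _) (normr_dotv_le u v); lra.
Qed.

Lemma vnormZ a u : vnorm (a *: u) = `|a| * vnorm u.
Proof.
by rewrite /vnorm dotvZl dotvZr mulrA -expr2 sqrtrM ?sqr_ge0 // sqrtr_sqr.
Qed.

Lemma vnormN u : vnorm (- u) = vnorm u.
Proof. by rewrite -scaleN1r vnormZ normrN1 mul1r. Qed.

Lemma vnormB_le u v : vnorm (u - v) <= vnorm u + vnorm v.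
Proof. by rewrite -(vnormN v) vnormD_le. Qed.

Lemma vnorm_lerB_dist u v : vnorm u - vnorm v <= vnorm (u - v).
Proof. have := vnormD_le (u - v) v; rewrite subrK; lra. Qed.

Definition mono_pairing (F : 'cV[R]_n -> 'cV[R]_n) u v := dotv (F u - F v) (u - v).

Lemma mono_pairingC F u v : mono_pairing F u v = mono_pairing F v u.
Proof. by rewrite /mono_pairing -[F u - F v]opprB -[u - v]opprB dotvNl dotvNr opprK. Qed.

Lemma vnorm_mulmx_le (M : 'M[R]_n) u :
  vnorm (M *m u) <= Num.sqrt (\sum_i dotv (row i M)^T (row i M)^T) * vnorm u.
Proof.
rewrite -(ler_pXn2r (isT : (0 < 2)%N)) ?nnegrE ?mulr_ge0 ?vnorm_ge0 ?sqrtr_ge0 //.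
rewrite exprMn !vnorm_sqr sqr_sqrtr; last by apply: sumr_ge0 => i _; exact: dotvv_ge0.
rewrite {1}/dotv mulr_suml; apply: ler_sum => i _.
have -> : (M *m u) i 0 = dotv (row i M)^T u.
  by rewrite mxE; apply: eq_bigr => j _; rewrite !mxE.
by rewrite -expr2 dotv_sqr_le.
Qed.

Lemma vnorm_mulmx_opnorm (M : 'M[R]_n) u : vnorm (M *m u) <= opnorm M * vnorm u.
Proof.
have [->|u_neq0] := eqVneq u 0; first by rewrite mulmx0 vnorm0 mulr0.
have u_gt0 : 0 < vnorm u.
  by rewrite lt_neqAle vnorm_ge0 andbT; apply: contra_neq u_neq0 => /esym/vnorm_eq0.
set x := (vnorm u)^-1 *: u.
have x1 : vnorm x = 1 by rewrite vnormZ ger0_norm ?invr_ge0 ?ltW // mulVf ?gt_eqF.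
rewrite -ler_pdivrMr //.
have <- : vnorm (M *m x) = vnorm (M *m u) / vnorm u.
  by rewrite /x -scalemxAr vnormZ ger0_norm ?invr_ge0 ?ltW // mulrC.
apply: ub_le_sup; last by exists x.
exists (Num.sqrt (\sum_i dotv (row i M)^T (row i M)^T)) => _ [y /= y1 <-].
by have := vnorm_mulmx_le M y; rewrite y1 mulr1.
Qed.

End Euclid.

Section RealPower.
Variable R : realType.
Implicit Types (a b t al : R).

Lemma powR_le al a b : 0 <= al -> 0 <= a -> a <= b -> a `^ al <= b `^ al.
Proof.
move=> al0 a0 ab; apply: (ge0_ler_powR al0) => //; rewrite nnegrE //.
exact: le_trans ab.
Qed.

Lemma powR_add2 al a : 0 < al -> 0 <= a -> a `^ (al + 2) = a `^ al * a ^+ 2.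
Proof.
move=> al0 a0; rewrite powRD; last by apply/implyP => /eqP; lra.
by rewrite (powR_mulrn 2 a0).
Qed.

Lemma ln_le_subr1 t : 0 < t -> ln t <= t - 1.
Proof. move=> t0; have := expR_ge1Dx (ln t); rewrite lnK //; lra. Qed.

(* [1 - t^α <= -α ln t] and [-t ln t <= 1 - t] *)
Lemma subr1_powR_mul_le al t : 0 < al -> 0 < t -> (1 - t `^ al) * t <= al * (1 - t).
Proof.
move=> al0 t0.
have h1 : 1 - t `^ al <= - (al * ln t).
  by rewrite /powR gt_eqF //; have := expR_ge1Dx (al * ln t); lra.
have h2 : - (t * ln t) <= 1 - t.
  have := @ln_le_subr1 t^-1; rewrite invr_gt0 lnV // => /(_ t0) h.
  have : t * (- ln t) <= t * (t^-1 - 1) by rewrite ler_pM2l.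
  by rewrite mulrBr mulfV ?gt_eqF // mulr1 mulrN.
apply: le_trans (_ : - (al * ln t) * t <= _); first by rewrite ler_pM2r.
have -> : - (al * ln t) * t = al * (- (t * ln t)) by ring.
by rewrite ler_pM2l.
Qed.

Lemma powRB_mul_le al a b : 0 < al -> 0 <= b -> b <= a ->
  (a `^ al - b `^ al) * b <= al * a `^ al * (a - b).
Proof.
move=> al0 b0 ba.
have [b_eq0|b_neq0] := eqVneq b 0.
  rewrite b_eq0 in ba *; rewrite mulr0 subr0.
  by apply: mulr_ge0 => //; apply: mulr_ge0; [exact: ltW | exact: powR_ge0].
have b_gt0 : 0 < b by rewrite lt_neqAle eq_sym b_neq0.
have a_gt0 : 0 < a by apply: lt_le_trans ba.
set t := b / a.
have -> : b = a * t by rewrite /t mulrCA mulfV ?gt_eqF // mulr1.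
rewrite powRM ?(ltW a_gt0) ?divr_ge0 ?(ltW b_gt0) ?(ltW a_gt0) //.
have -> : (a `^ al - a `^ al * t `^ al) * (a * t)
  = (a `^ al * a) * ((1 - t `^ al) * t) by ring.
have -> : al * a `^ al * (a - a * t) = (a `^ al * a) * (al * (1 - t)) by ring.
by rewrite ler_pM2l ?mulr_gt0 ?powR_gt0 // subr1_powR_mul_le // divr_gt0.
Qed.

Lemma powRB_sqrB_ge0 al a b : 0 <= al -> 0 <= a -> 0 <= b ->
  0 <= (a `^ al - b `^ al) * (a ^+ 2 - b ^+ 2).
Proof.
move=> al0; wlog ba : a b / b <= a => [hwlog a0 b0|a0 b0].
  have [|/ltW ab] := leP b a; first by move=> ba; apply: hwlog.
  by rewrite -mulrNN !opprB; apply: hwlog.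
by rewrite mulr_ge0 // subr_ge0 ?ler_sqr //; exact: powR_le.
Qed.

End RealPower.

Section Coercive.
Variables (R : realType) (n : nat) (A : 'M[R]_n) (kappa0 : R).
Hypothesis hA : forall u : 'cV[R]_n, kappa0 ^+ 2 * vnorm u ^+ 2 <= dotv u (A *m u).

Lemma mulmx_beta_monotone2 : 0 < kappa0 -> beta_monotone 2 (fun u : 'cV[R]_n => A *m u).
Proof.
move=> hk; exists (kappa0 ^+ 2); first exact: exprn_gt0.
by move=> u v; rewrite (powR_mulrn 2 (vnorm_ge0 _)) -mulmxBr dotvC; exact: hA.
Qed.

Lemma coercive_posdef : 0 < kappa0 -> forall u, u != 0 -> 0 < dotv u (A *m u).
Proof.
move=> hk u u_neq0; apply: lt_le_trans (hA u).
rewrite mulr_gt0 ?exprn_gt0 // lt_neqAle vnorm_ge0 andbT.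
by apply: contra_neq u_neq0 => /esym/vnorm_eq0.
Qed.

Section NormWeight.
Variable L : R.
Hypothesis hL : forall v, vnorm (A *m v) <= L * vnorm v.

Lemma norm_weighted_pairing_ge_of_le al u v : 0 < al -> 0 <= L -> vnorm v <= vnorm u ->
  (kappa0 ^+ 2 - al * L) * vnorm u `^ al * vnorm (u - v) ^+ 2
    <= mono_pairing (fun x => vnorm x `^ al *: (A *m x)) u v.
Proof.
move=> al0 L0 ba; rewrite /mono_pairing.
set a := vnorm u; set b := vnorm v; set w := u - v.
have -> : a `^ al *: (A *m u) - b `^ al *: (A *m v)
   = a `^ al *: (A *m w) + (a `^ al - b `^ al) *: (A *m v).
  by rewrite /w mulmxBr scalerBr scalerBl addrA subrK.
rewrite dotvDl !dotvZl.
set P := a `^ al; set Q := b `^ al; set X := dotv (A *m w) w.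
set Y := dotv (A *m v) w; set W := vnorm w.
have b0 : 0 <= b by exact: vnorm_ge0.
have W0 : 0 <= W by exact: vnorm_ge0.
have P0 : 0 <= P by exact: powR_ge0.
have PQ : 0 <= P - Q by rewrite subr_ge0; exact: powR_le (ltW al0) b0 ba.
have hX : kappa0 ^+ 2 * W ^+ 2 <= X by rewrite /X dotvC; exact: hA.
have hY : - (L * b * W) <= Y.
  have := normr_dotv_le (A *m v) w; rewrite -/W -/Y => Ybound.
  have : vnorm (A *m v) * W <= L * b * W by rewrite ler_wpM2r // hL.
  have := ler_norm (- Y); rewrite normrN; lra.
have hK : (P - Q) * b <= al * P * (a - b) by exact: powRB_mul_le.
have hab : a - b <= W by exact: vnorm_lerB_dist.
have e1 : P * (kappa0 ^+ 2 * W ^+ 2) <= P * X by rewrite ler_wpM2l.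
have e2 : (P - Q) * (- (L * b * W)) <= (P - Q) * Y by rewrite ler_wpM2l.
have e3 : (P - Q) * b * (L * W) <= al * P * (a - b) * (L * W)
  by rewrite ler_wpM2r // mulr_ge0.
have e4 : al * P * (a - b) * (L * W) <= al * P * W * (L * W).
  by rewrite ler_wpM2r ?mulr_ge0 // ler_wpM2l // mulr_ge0 // (ltW al0).
lra.
Qed.

Lemma norm_weighted_pairing_ge al u v : 0 < al -> 0 <= L -> al * L <= kappa0 ^+ 2 ->
  (kappa0 ^+ 2 - al * L) * (vnorm (u - v) / 2) `^ al * vnorm (u - v) ^+ 2
    <= mono_pairing (fun x => vnorm x `^ al *: (A *m x)) u v.
Proof.
move=> al0 L0 aL.
wlog ba : u v / vnorm v <= vnorm u.
  move=> hwlog; have [|/ltW] := leP (vnorm v) (vnorm u); first exact: hwlog.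
  by rewrite mono_pairingC -[u - v]opprB vnormN; exact: hwlog.
apply: le_trans (norm_weighted_pairing_ge_of_le al0 L0 ba).
rewrite ler_wpM2r ?sqr_ge0 // ler_wpM2l ?subr_ge0 //.
rewrite (powR_le (ltW al0)) ?divr_ge0 ?vnorm_ge0 //.
have := vnormB_le u v; lra.
Qed.

Lemma bound_gt0_of_le_div al : 0 < al -> al <= kappa0 ^+ 2 / L -> 0 < L.
Proof.
move=> al0 aL; rewrite ltNge; apply/negP => L_le0.
have : kappa0 ^+ 2 / L <= 0 by rewrite mulr_ge0_le0 ?sqr_ge0 // invr_le0.
lra.
Qed.

Lemma norm_weighted_monotone al : 0 < al -> al <= kappa0 ^+ 2 / L ->
  monotone_map (fun u : 'cV[R]_n => vnorm u `^ al *: (A *m u)).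
Proof.
move=> al0 aL u v; have L0 := bound_gt0_of_le_div al0 aL.
have aL' : al * L <= kappa0 ^+ 2 by rewrite -ler_pdivlMr.
apply: le_trans (norm_weighted_pairing_ge u v al0 (ltW L0) aL').
by apply: mulr_ge0 (sqr_ge0 _); apply: mulr_ge0 (powR_ge0 _ _); rewrite subr_ge0.
Qed.

Lemma norm_weighted_beta_monotone al : 0 < al -> al < kappa0 ^+ 2 / L ->
  beta_monotone (al + 2) (fun u : 'cV[R]_n => vnorm u `^ al *: (A *m u)).
Proof.
move=> al0 aL; have L0 := bound_gt0_of_le_div al0 (ltW aL).
have aL' : al * L < kappa0 ^+ 2 by rewrite -ltr_pdivlMr.
exists ((kappa0 ^+ 2 - al * L) * 2^-1 `^ al).
  by rewrite mulr_gt0 ?subr_gt0 // powR_gt0 // invr_gt0.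
move=> u v; have := norm_weighted_pairing_ge u v al0 (ltW L0) (ltW aL').
rewrite powR_add2 ?vnorm_ge0 // powRM ?vnorm_ge0 ?invr_ge0 //; rewrite /mono_pairing; lra.
Qed.

End NormWeight.

Section SqrtWeight.
Variable S : 'M[R]_n.
Hypothesis hS : S^T *m S = A.

Lemma vnorm_mulmx_sqr x : vnorm (S *m x) ^+ 2 = dotv x (A *m x).
Proof. by rewrite vnorm_sqr dotv_mulmx mulmxA hS dotvC. Qed.

Lemma sqrt_weighted_pairingE al u v :
  let a := vnorm (S *m u) in let b := vnorm (S *m v) in
  mono_pairing (fun x => vnorm (S *m x) `^ al *: (A *m x)) u v
  = 2^-1 * (a `^ al + b `^ al) * vnorm (S *m (u - v)) ^+ 2
    + 2^-1 * (a `^ al - b `^ al) * (a ^+ 2 - b ^+ 2).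
Proof.
move=> a b; rewrite /mono_pairing dotvBl !dotvZl !vnorm_mulmx_sqr -/a -/b.
have Asym : dotv v (A *m u) = dotv u (A *m v).
  by rewrite dotv_mulmx -hS trmx_mul trmxK dotvC.
rewrite !mulmxBr !(dotvBl, dotvBr) !(dotvC (A *m _)) Asym.
by field.
Qed.

Lemma sqrt_weighted_pairing_ge al u v : 0 < kappa0 -> 0 < al ->
  2^-1 * (kappa0 / 2) `^ al * kappa0 ^+ 2 * vnorm (u - v) `^ (al + 2)
  <= mono_pairing (fun x => vnorm (S *m x) `^ al *: (A *m x)) u v.
Proof.
move=> hk al0; rewrite sqrt_weighted_pairingE.
set a := vnorm (S *m u); set b := vnorm (S *m v).
set r := vnorm (S *m (u - v)); set W := vnorm (u - v).
set P := a `^ al; set Q := b `^ al.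
have a0 : 0 <= a by exact: vnorm_ge0.
have b0 : 0 <= b by exact: vnorm_ge0.
have W0 : 0 <= W by exact: vnorm_ge0.
have P0 : 0 <= P by exact: powR_ge0.
have Q0 : 0 <= Q by exact: powR_ge0.
have cross_ge0 : 0 <= (P - Q) * (a ^+ 2 - b ^+ 2).
  exact: powRB_sqrB_ge0 (ltW al0) a0 b0.
have rW : kappa0 * W <= r.
  rewrite -(ler_pXn2r (isT : (0 < 2)%N)) ?nnegrE ?vnorm_ge0 ?mulr_ge0 ?(ltW hk) //.
  by rewrite exprMn vnorm_mulmx_sqr; exact: hA.
have rab : r <= a + b by rewrite /r mulmxBr; exact: vnormB_le.
have weight_ge : (kappa0 / 2 * W) `^ al <= P + Q.
  have kW0 : 0 <= kappa0 / 2 * W by rewrite mulr_ge0 ?divr_ge0 ?(ltW hk).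
  have [ba|ab] := leP b a.
    by apply: le_trans (_ : P <= _); [apply: powR_le (ltW al0) kW0 _; lra | lra].
  by apply: le_trans (_ : Q <= _); [apply: powR_le (ltW al0) kW0 _; lra | lra].
rewrite powR_add2 //.
have -> : 2^-1 * (kappa0 / 2) `^ al * kappa0 ^+ 2 * (W `^ al * W ^+ 2)
  = 2^-1 * ((kappa0 / 2 * W) `^ al * (kappa0 * W) ^+ 2).
  by rewrite [in RHS]powRM ?divr_ge0 ?(ltW hk) //; ring.
apply: le_trans (_ : 2^-1 * ((P + Q) * r ^+ 2) <= _); last lra.
rewrite ler_pM2l ?invr_gt0 //; apply: ler_pM; rewrite ?powR_ge0 ?sqr_ge0 //.
by rewrite ler_sqr ?nnegrE ?mulr_ge0 ?vnorm_ge0 ?(ltW hk).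
Qed.

Lemma sqrt_weighted_beta_monotone al : 0 < kappa0 -> 0 < al ->
  beta_monotone (al + 2) (fun u : 'cV[R]_n => vnorm (S *m u) `^ al *: (A *m u)).
Proof.
move=> hk al0; exists (2^-1 * (kappa0 / 2) `^ al * kappa0 ^+ 2).
  by rewrite !mulr_gt0 ?exprn_gt0 ?invr_gt0 ?powR_gt0 ?divr_gt0.
by move=> u v; exact: sqrt_weighted_pairing_ge.
Qed.

End SqrtWeight.
End Coercive.

Section UnitaryDiag.
Local Open Scope sesquilinear_scope.
Variables (C : numClosedFieldType) (n : nat).

Lemma mul_adj_unitarymx (P : 'M[C]_n) : P \is unitarymx -> P^t* *m P = 1%:M.
Proof. by move=> Pu; rewrite -invmx_unitary // mulVmx // unitarymx_unit. Qed.

Lemma comm_diag_mx_map (W : 'M[C]_n) (d : 'rV[C]_n) (g : C -> C) :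
  W *m diag_mx d = diag_mx d *m W ->
  W *m diag_mx (map_mx g d) = diag_mx (map_mx g d) *m W.
Proof.
move=> /matrixP Wd; apply/matrixP => i j.
move: (Wd i j); rewrite !(mul_mx_diag, mul_diag_mx) !mxE.
have [->|dij] := eqVneq (d 0 i) (d 0 j); first by move=> _; rewrite mulrC.
move=> /eqP; rewrite mulrC -subr_eq0 -mulrBl mulf_eq0 subr_eq0 eq_sym (negbTE dij) /=.
by move=> /eqP ->; rewrite mulr0 mul0r.
Qed.

Lemma unitary_diag_map_eq (P Q : 'M[C]_n) (d : 'rV[C]_n) (g : C -> C) :
  P \is unitarymx -> Q \is unitarymx ->
  P^t* *m diag_mx d *m P = Q^t* *m diag_mx d *m Q ->
  P^t* *m diag_mx (map_mx g d) *m P = Q^t* *m diag_mx (map_mx g d) *m Q.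
Proof.
move=> Pu Qu E.
have QPd : (Q *m P^t*) *m diag_mx d = diag_mx d *m (Q *m P^t*).
  have := congr1 (fun M => Q *m M *m P^t*) E.
  rewrite !mulmxA (unitarymxP Qu) mul1mx -!mulmxA (unitarymxP Pu) mulmx1 !mulmxA.
  by move=> ->.
have := congr1 (fun M => Q^t* *m M *m P) (comm_diag_mx_map g QPd).
rewrite !mulmxA mul_adj_unitarymx // mul1mx -!mulmxA mul_adj_unitarymx // mulmx1.
by rewrite !mulmxA => ->.
Qed.

End UnitaryDiag.

Section RealSqrt.
Local Open Scope sesquilinear_scope.
Variables (R : realType) (n : nat) (A : 'M[R]_n).
Hypothesis Asym : A^T = A.
Hypothesis A_pd : forall u : 'cV[R]_n, u != 0 -> 0 < dotv u (A *m u).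

Local Notation C := R[i].
Local Notation rc := (real_complex R).
Local Notation conjC := Num.Def.conjC.
Let Ac : 'M[C]_n := map_mx rc A.

Lemma conjC_real_complex (x : R) : (rc x)^* = rc x.
Proof. exact: conjc_real. Qed.

Lemma adj_real_complex m p (M : 'M[R]_(m, p)) : (map_mx rc M)^t* = map_mx rc M^T.
Proof. by apply/matrixP => i j; rewrite !mxE conjC_real_complex. Qed.

Lemma Re_sum (I : Type) (r : seq I) (P : pred I) (F : I -> C) :
  complex.Re (\sum_(i <- r | P i) F i) = \sum_(i <- r | P i) complex.Re (F i).
Proof. by apply: (big_morph (@complex.Re R)) => // -[a b] [c e]. Qed.

Let dotv_mulmx_ge0 u : 0 <= dotv u (A *m u).
Proof.
have [->|u_neq0] := eqVneq u 0; first by rewrite dotv0l.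
exact/ltW/A_pd.
Qed.

(* For [z = x + i y] the hermitian form of [Ac] is [x A x^T + y A y^T]. *)
Let herm_form_ge0 (z : 'rV[C]_n) : 0 <= (z *m Ac *m z^t*) 0 0.
Proof.
have z_real : (z *m Ac *m z^t*) 0 0 \is Num.real.
  have herm : (z *m Ac *m z^t*)^t* = z *m Ac *m z^t*.
    by rewrite !trmx_mul !map_mxM trmxCK adj_real_complex Asym mulmxA.
  by rewrite CrealE -{2}herm !mxE.
set x : 'cV[R]_n := \col_k complex.Re (z 0 k).
set y : 'cV[R]_n := \col_k complex.Im (z 0 k).
have ReE : complex.Re ((z *m Ac *m z^t*) 0 0) = dotv x (A *m x) + dotv y (A *m y).
  rewrite mxE Re_sum.
  under eq_bigr do rewrite !mxE mulr_suml Re_sum.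
  rewrite /dotv -big_split /= exchange_big /=; apply: eq_bigr => k _.
  rewrite !mxE !mulr_sumr -big_split /=; apply: eq_bigr => l _.
  by rewrite !mxE; case: (z 0 k) => a1 b1; case: (z 0 l) => a2 b2 /=; ring.
move: z_real ReE; case: ((z *m Ac *m z^t*) 0 0) => a b /=.
rewrite complex_real => /eqP -> ->; rewrite lecE /= eqxx /=.
by rewrite addr_ge0 ?dotv_mulmx_ge0.
Qed.

Let P := spectralmx Ac.
Let d := spectral_diag Ac.

Let unitary_spectral : P \is unitarymx := spectral_unitarymx Ac.

Let Ac_spectral : Ac = P^t* *m diag_mx d *m P.
Proof.
rewrite -(invmx_unitary unitary_spectral); apply/orthomx_spectralP/normalmxP.
by rewrite adj_real_complex Asym.
Qed.

Let spectral_diag_ge0 j : 0 <= d 0 j.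
Proof.
have <- : (P *m Ac *m P^t*) j j = d 0 j.
  rewrite Ac_spectral !mulmxA (unitarymxP unitary_spectral) mul1mx.
  by rewrite -mulmxA (unitarymxP unitary_spectral) mulmx1 mxE eqxx mulr1n.
have -> : (P *m Ac *m P^t*) j j = (row j P *m Ac *m (row j P)^t*) 0 0.
  by rewrite !mxE; apply: eq_bigr => k _; rewrite !mxE; congr (_ * _);
    apply: eq_bigr => l _; rewrite [row j P 0 l]mxE.
exact: herm_form_ge0.
Qed.

Let s := map_mx (fun x : C => rc (Num.sqrt (complex.Re x))) d.
Let Sc := P^t* *m diag_mx s *m P.

Let spectral_diag_sqrt j : s 0 j * s 0 j = d 0 j.
Proof.
have := spectral_diag_ge0 j; rewrite mxE -rmorphM -expr2 lecE /= => /andP[/eqP Im0 Re0].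
by rewrite sqr_sqrtr //; case: (d 0 j) Im0 => a b /= ->.
Qed.

Let Sc_sqr : Sc *m Sc = Ac.
Proof.
rewrite /Sc Ac_spectral -!mulmxA; congr (_ *m _).
rewrite (mulmxA P) (unitarymxP unitary_spectral) mul1mx mulmxA; congr (_ *m _).
by rewrite mulmx_diag; congr diag_mx; apply/rowP => j; rewrite mxE spectral_diag_sqrt.
Qed.

Let Sc_conj : map_mx conjC Sc = Sc.
Proof.
set Q := map_mx conjC P.
have conj_adj m p (M : 'M[C]_(m, p)) : (map_mx conjC M)^t* = map_mx conjC (M^t*).
  by apply/matrixP => i j; rewrite !mxE.
have Qu : Q \is unitarymx.
  by apply/unitarymxP; rewrite conj_adj -map_mxM (unitarymxP unitary_spectral) map_mx1.
have d_conj : map_mx conjC d = d.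
  by apply/matrixP => i j; rewrite (ord1 i) !mxE conj_Creal // ger0_real // spectral_diag_ge0.
have s_conj : map_mx conjC s = s.
  by apply/matrixP => i j; rewrite !mxE conjC_real_complex.
have EQ : P^t* *m diag_mx d *m P = Q^t* *m diag_mx d *m Q.
  rewrite -Ac_spectral -[in LHS](_ : map_mx conjC Ac = Ac); last first.
    by apply/matrixP => i j; rewrite !mxE conjC_real_complex.
  by rewrite Ac_spectral !map_mxM map_diag_mx d_conj conj_adj.
rewrite /Sc !map_mxM map_diag_mx s_conj -conj_adj.
exact: (esym (unitary_diag_map_eq _ unitary_spectral Qu EQ)).
Qed.

Let S := map_mx (@complex.Re R) Sc.

Let real_complex_S : map_mx rc S = Sc.
Proof.
apply/matrixP => i j; rewrite mxE [S i j]mxE RRe_real // CrealE.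
by move/matrixP: Sc_conj => /(_ i j); rewrite [LHS]mxE => ->.
Qed.

Let S_sym : S^T = S.
Proof.
have Sc_adj : Sc^t* = Sc.
  rewrite /Sc !trmx_mul !map_mxM trmxCK tr_diag_mx map_diag_mx mulmxA.
  by congr (_ *m _ *m _); congr diag_mx; apply/matrixP => i j; rewrite !mxE /= conjC_real_complex.
apply: (@map_mx_inj _ _ rc).
by rewrite -(map_trmx rc S) real_complex_S -{2}Sc_adj -{1}Sc_conj map_trmx.
Qed.

Let S_sqr : S *m S = A.
Proof.
apply: (@map_mx_inj _ _ rc).
by rewrite map_mxM real_complex_S Sc_sqr.
Qed.

Let S_pd u : u != 0 -> 0 < dotv u (S *m u).
Proof.
move=> u_neq0; set uc := map_mx rc u^T; set w := uc *m P^t*.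
have formE (M : 'M[R]_n) (t : 'rV[C]_n) : map_mx rc M = P^t* *m diag_mx t *m P ->
    rc (dotv u (M *m u)) = \sum_j t 0 j * (w 0 j * (w 0 j)^*).
  move=> ME; have -> : rc (dotv u (M *m u)) = (uc *m map_mx rc M *m uc^t*) 0 0.
    rewrite adj_real_complex trmxK -!map_mxM mxE -mulmxA; congr rc.
    by rewrite /dotv [RHS]mxE; apply: eq_bigr => i _; rewrite !mxE.
  have -> : uc *m map_mx rc M *m uc^t* = w *m diag_mx t *m w^t*.
    by rewrite ME /w trmx_mul map_mxM trmxCK !mulmxA.
  by rewrite mul_mx_diag mxE; apply: eq_bigr => j _; rewrite !mxE mulrCA mulrA.
have eA := formE A d Ac_spectral; have eS := formE S s real_complex_S.
have s_ge0 j : 0 <= s 0 j by rewrite mxE -(rmorph0 rc) lecR sqrtr_ge0.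
have terms_ge0 j : 0 <= s 0 j * (w 0 j * (w 0 j)^*) by rewrite mulr_ge0 ?mul_conjC_ge0.
rewrite -ltcR eS rmorph0 lt_def sumr_ge0 // andbT; apply/negP => /eqP /psumr_eq0P sum0.
have : rc (dotv u (A *m u)) = 0.
  by rewrite eA big1 // => j _; rewrite -spectral_diag_sqrt -mulrA sum0 ?mulr0.
by move=> /eqP; rewrite -(rmorph0 rc) (inj_eq (@complexI R)) gt_eqF ?A_pd.
Qed.

Lemma posdef_sqrt_exists : exists S : 'M[R]_n, posdefmx S /\ S *m S = A.
Proof. by exists S; split; [split; [exact: S_sym | exact: S_pd] | exact: S_sqr]. Qed.

End RealSqrt.

Lemma sqrtmx_spec (R : realType) (n : nat) (A : 'M[R]_n) : symmx A ->
  (forall u : 'cV[R]_n, u != 0 -> 0 < dotv u (A *m u)) ->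
  (sqrtmx A)^T *m sqrtmx A = A.
Proof.
move=> Asym A_pd; have [[S_sym _] S_sqr] := epsilon_spec (inhabits 0) _
  (posdef_sqrt_exists Asym A_pd).
by rewrite /sqrtmx S_sym S_sqr.
Qed.

Theorem mainTheorem10 (R : realType) (n : nat) (A : 'M[R]_n) (kappa0 : R)
  (hk : 0 < kappa0)
  (hA : forall u : 'cV[R]_n, kappa0 ^+ 2 * vnorm u ^+ 2 <= dotv u (A *m u)) :
  beta_monotone 2 (fun u : 'cV[R]_n => A *m u)
  /\ (symmx A -> forall alpha : R, 0 < alpha ->
        beta_monotone (alpha + 2)
          (fun u : 'cV[R]_n => (vnorm (sqrtmx A *m u) `^ alpha) *: (A *m u)))
  /\ (forall alpha : R, 0 < alpha ->
        (alpha = kappa0 ^+ 2 / opnorm A ->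
           monotone_map (fun u : 'cV[R]_n => (vnorm u `^ alpha) *: (A *m u)))
        /\ (alpha < kappa0 ^+ 2 / opnorm A ->
           beta_monotone (alpha + 2)
             (fun u : 'cV[R]_n => (vnorm u `^ alpha) *: (A *m u)))).
Proof.
split; first exact: mulmx_beta_monotone2.
split.
  move=> Asym al al0; apply: sqrt_weighted_beta_monotone => //.
  by apply: sqrtmx_spec => //; exact: coercive_posdef hA hk.
move=> al al0; split => [aE|aL].
  by apply: (norm_weighted_monotone hA (vnorm_mulmx_opnorm A) al0); rewrite aE.
exact: (norm_weighted_beta_monotone hA (vnorm_mulmx_opnorm A) al0 aL).
Qed.
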